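(* Let $S_1,\dots,S_d$ be independent random variables with $S_j\sim\mathrm{Bin}(n,u_j)$ and $0<u_j<1$ for all $j\in\{1,\dots,d\}$, and write $\mathbf u=(u_1,\dots,u_d)$. Then for every $\delta>0$, $$P\Big\{g\big(\tfrac{S_1}n,\dots,\tfrac{S_d}n\big)\ge g(\mathbf u)(1+\delta)\Big\}\le 2d\exp\{-n\,g(\mathbf u)\,h(1+\delta)\},$$ $$P\Big\{g\big(\tfrac{S_1}n,\dots,\tfrac{S_d}n\big)\le g(\mathbf u)(1-\delta)\Big\}\le 4d\exp\{-n\,g(\mathbf u)\,h(1+\delta)\},$$ and in particular $h(1+\delta)\ge\frac13\delta^2$ for $0<\delta\le1$.
   Context: $d\ge2$; $g(\mathbf u)=\bigwedge_{j=1}^d\{u_j\wedge\bigvee_{k\ne j}(1-u_k)\}$ for $\mathbf u\in[0,1]^d$ ($\wedge$ = min, $\vee$ = max); $h(x)=x(\log x-1)+1$ for $x>0$. *)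

From HB Require Import structures.
From mathcomp Require Import all_boot all_order all_algebra.
From mathcomp Require Import all_classical all_reals all_analysis.
Set Implicit Arguments. Unset Strict Implicit. Unset Printing Implicit Defensive.
Import Order.TTheory GRing.Theory Num.Theory.
Local Open Scope ring_scope.

Definition gfun (R : realType) (d : nat) (u : 'I_d -> R) : R :=
  \big[Num.min/1]_(j < d)
     Num.min (u j) (\big[Num.max/0]_(k < d | k != j) (1 - u k)).

Definition hfun (R : realType) (x : R) : R := x * (ln x - 1) + 1.

Definition binpmf (R : realType) (n : nat) (p : R) (k : nat) : R :=
  ('C(n, k))%:R * p ^+ k * (1 - p) ^+ (n - k).

(* Probability that (S_1,...,S_d) lies in E, where the S_j are independent
   with S_j ~ Bin(n, u_j): sum of the joint (product) pmf over outcomes in E. *)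
Definition probBin (R : realType) (d n : nat) (u : 'I_d -> R)
  (E : pred {ffun 'I_d -> 'I_n.+1}) : R :=
  \sum_(s : {ffun 'I_d -> 'I_n.+1} | E s) \prod_(j < d) binpmf n (u j) (s j).

Definition scaled (R : realType) (d n : nat) (s : {ffun 'I_d -> 'I_n.+1}) : 'I_d -> R :=
  fun j => (nat_of_ord (s j))%:R / n%:R.
Arguments probBin {R d} n u E.
Arguments scaled {R d n} s j.

From HB Require Import structures.
From mathcomp Require Import all_boot all_order all_algebra.
From mathcomp Require Import all_classical all_reals all_analysis.
From mathcomp Require Import ring lra.
Import Order.TTheory GRing.Theory Num.Theory.
Import numFieldNormedType.Exports.
Set Implicit Arguments.
Unset Strict Implicit.
Unset Printing Implicit Defensive.
Local Open Scope ring_scope.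

(* Upper tail: if g(S/n) >= g(u)(1+δ), let j attain g(u).  Either
   u_j <= g(u) and S_j/n >= g(u)(1+δ), or some k <> j has 1 - u_k <= g(u) and
   1 - S_k/n >= g(u)(1+δ).  Lower tail: if g(S/n) <= g(u)(1-δ), let j attain
   g(S/n); either S_j/n <= g(u)(1-δ) while u_j >= g(u), or some k <> j has
   1 - S_k/n <= g(u)(1-δ) while 1 - u_k >= g(u).  So each tail is covered by
   2d events, each a tail of a single Bin(n, p) or of n - Bin(n, p) with p on
   the favourable side of g(u).  The Chernoff bound with exponent ±ln(1+δ)
   bounds each of them by exp(-n g(u) h(1+δ)); on the lower side this needs
   ln x <= (x - 1/x)/2.  Finally h(1+δ) >= δ^2/3 follows from
   ln x >= 2(x-1)/(x+1). *)

Section LnBounds.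
Variable R : realType.

Lemma ger0_is_derive_ndecr (f df : R -> R) (a : R) :
  (forall x, a <= x -> is_derive x (1 : R) f (df x)) ->
  (forall x, a < x -> 0 <= df x) ->
  forall x, a <= x -> f a <= f x.
Proof.
move=> fD dfge0 x ax; apply: (@ger0_derive1_ndecr R f a x) => //.
- by move=> y; rewrite in_itv /= => /andP[/ltW /fD fy _]; exact: ex_derive.
- move=> y; rewrite in_itv /= => /andP[ay _].
  by have fy := fD y (ltW ay); rewrite derive1E derive_val dfge0.
- apply: continuous_in_subspaceT => y; rewrite inE /= in_itv /= => /andP[/fD fy _].
  exact/differentiable_continuous/derivable1_diffP; exact: ex_derive.
Qed.

Lemma ln_le_half_subV (x : R) : 1 <= x -> ln x <= (x - x^-1) / 2.
Proof.
move=> x1; rewrite -subr_ge0.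
pose f : R -> R := (id - [eta GRing.inv]) * cst (2^-1 : R) - ln (R := R).
have fE y : f y = (y - y^-1) / 2 - ln y by [].
have <- : f 1 = 0 by rewrite fE ln1 invr1 subrr mul0r subr0.
rewrite -fE.
apply: (@ger0_is_derive_ndecr f (fun y => (1 - y^-1) ^+ 2 / 2) 1) => // y y1.
  have y0 : 0 < y by apply: lt_le_trans y1.
  have dinv := is_deriveV (f := id) (lt0r_neq0 y0) (is_derive_id y 1).
  have dmul := is_deriveM (is_deriveB (is_derive_id y 1) dinv)
    (is_derive_cst (2^-1 : R) y 1).
  apply: is_derive_eq (is_deriveB dmul (is_derive1_ln y0)) _.
  rewrite scaler0 add0r /GRing.scale /= mulr1 opprK -exprVn.
  by field; rewrite gt_eqF.
by rewrite divr_ge0 ?sqr_ge0.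
Qed.

Lemma ln_ge_pade (x : R) : 1 <= x -> 2 * (x - 1) / (x + 1) <= ln x.
Proof.
move=> x1; have x0 : 0 < x by apply: lt_le_trans x1.
have xD1 : 0 < x + 1 by rewrite addr_gt0.
have -> : 2 * (x - 1) / (x + 1) = 2 - 4 / (x + 1) by field; rewrite gt_eqF.
rewrite lerBlDr.
pose f : R -> R := ln (R := R) + cst (4 : R) * (fun y => (y + 1)^-1).
have fE y : f y = ln y + 4 / (y + 1) by [].
have <- : f 1 = 2 by rewrite fE ln1 add0r; field.
rewrite -fE.
apply: (@ger0_is_derive_ndecr f (fun y => (y - 1) ^+ 2 / (y * (y + 1) ^+ 2)) 1)
  => // y y1.
  have y0 : 0 < y by apply: lt_le_trans y1.
  have yD1 : (id + cst 1) y != 0 by rewrite /= gt_eqF // addr_gt0.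
  have dinv := is_deriveV yD1 (is_deriveD (is_derive_id y 1) (is_derive_cst (1 : R) y 1)).
  have dmul := is_deriveM (is_derive_cst (4 : R) y 1) dinv.
  apply: is_derive_eq (is_deriveD (is_derive1_ln y0) dmul) _.
  rewrite scaler0 addr0 /GRing.scale /= addr0 mulr1 mulrN.
  have -> : (id + cst 1) y = y + 1 by [].
  by field; rewrite ?gt_eqF ?mulr_gt0 ?exprn_gt0 ?addr_gt0.
have y0 : 0 < y := lt_trans ltr01 y1.
apply: divr_ge0; first exact: sqr_ge0.
by rewrite mulr_ge0 ?sqr_ge0 // ltW.
Qed.

Lemma hfun1D_ge_sqr_div3 (δ : R) : 0 < δ <= 1 -> δ ^+ 2 / 3 <= hfun (1 + δ).
Proof.
case/andP=> δ0 δ1.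
have := @ln_ge_pade (1 + δ) (ler_wpDr (ltW δ0) (lexx 1)).
have -> : 2 * (1 + δ - 1) / (1 + δ + 1) = 2 * δ / (2 + δ).
  by congr (_ / _); ring.
rewrite /hfun; set L := ln _; set q := 2 * δ / (2 + δ) => qL.
have qE : q * (2 + δ) = 2 * δ by rewrite mulfVK // gt_eqF // addr_gt0.
have q0 : 0 <= q by rewrite divr_ge0 ?mulr_ge0 ?ltW ?addr_gt0.
nra.
Qed.
End LnBounds.

Section BinomialTails.
Variable R : realType.
Implicit Types (n : nat) (p g t c x δ : R).

Lemma binpmf_ge0 n p k : 0 <= p <= 1 -> 0 <= binpmf n p k.
Proof. by case/andP=> p0 p1; rewrite !mulr_ge0 ?exprn_ge0 ?subr_ge0. Qed.

Lemma binpmf_mgf n p x :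
  \sum_(k < n.+1) binpmf n p k * x ^+ k = (1 - p + p * x) ^+ n.
Proof.
rewrite exprDn; apply: eq_bigr => k _.
by rewrite /binpmf exprMn -mulr_natr; ring.
Qed.

Lemma sum_binpmf n p : \sum_(k < n.+1) binpmf n p k = 1.
Proof.
have := binpmf_mgf n p 1; rewrite mulr1 subrK expr1n => <-.
by under [RHS]eq_bigr do rewrite expr1n mulr1.
Qed.

Lemma binpmf_mgf_le n p t : 0 <= p <= 1 ->
  \sum_(k < n.+1) binpmf n p k * expR (t * k%:R)
    <= expR (n%:R * p * (expR t - 1)).
Proof.
case/andP=> p0 p1; under eq_bigr do rewrite expRM_natr.
rewrite binpmf_mgf -mulrA expRM_natl lerXn2r ?nnegrE ?expR_ge0 //.
  by rewrite addr_ge0 ?subr_ge0 ?mulr_ge0 ?expR_ge0.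
have -> : 1 - p + p * expR t = 1 + p * (expR t - 1) by ring.
exact: expR_ge1Dx.
Qed.

Lemma binpmf_rev n p (k : 'I_n.+1) :
  binpmf n p (rev_ord k) = binpmf n (1 - p) k.
Proof.
have kn : (k <= n)%N by rewrite -ltnS.
by rewrite /binpmf /= subSS bin_sub // subKn // subKr mulrAC.
Qed.

Lemma binpmf_chernoff n p t c (P : pred 'I_n.+1) : 0 <= p <= 1 ->
  (forall k, P k -> t * c <= t * k%:R) ->
  \sum_(k < n.+1 | P k) binpmf n p k <= expR (n%:R * p * (expR t - 1) - t * c).
Proof.
move=> p01 Pc.
apply: (@le_trans _ _
  (\sum_(k < n.+1) binpmf n p k * expR (t * k%:R) * expR (- (t * c)))).
  rewrite big_mkcond /=; apply: ler_sum => k _; case: ifP => Pk.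
    rewrite -mulrA -expRD ler_peMr ?binpmf_ge0 //.
    by apply: le_trans (expR_ge1Dx _); rewrite lerDl subr_ge0 Pc.
  by apply/mulr_ge0/expR_ge0/mulr_ge0/expR_ge0; exact: binpmf_ge0.
by rewrite -big_distrl /= expRD ler_wpM2r ?expR_ge0 ?binpmf_mgf_le.
Qed.

Lemma binpmf_tail_ge n p g δ : (0 < n)%N -> 0 <= p <= 1 -> p <= g -> 0 < δ ->
  \sum_(k < n.+1 | g * (1 + δ) <= k%:R / n%:R) binpmf n p k
    <= expR (- (n%:R * g * hfun (1 + δ))).
Proof.
move=> n0 p01 pg δ0; have δ1 : 0 < 1 + δ by rewrite addr_gt0.
have L0 : 0 <= ln (1 + δ) by rewrite ln_ge0 // lerDl ltW.
apply: le_trans (@binpmf_chernoff n p (ln (1 + δ)) (n%:R * (g * (1 + δ))) _ p01 _) _.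
  by move=> k; rewrite ler_pdivlMr ?ltr0n // mulrC; exact: ler_wpM2l.
have pgδ : n%:R * p * δ <= n%:R * g * δ by rewrite ler_pM2r // ler_pM2l ?ltr0n.
rewrite ler_expR lnK ?posrE // /hfun; set L := ln _.
lra.
Qed.

Lemma binpmf_tail_le n p g δ : (0 < n)%N -> 0 <= g <= p -> p <= 1 -> 0 < δ ->
  \sum_(k < n.+1 | k%:R / n%:R <= g * (1 - δ)) binpmf n p k
    <= expR (- (n%:R * g * hfun (1 + δ))).
Proof.
move=> n0 /andP[g0 gp] p1 δ0; have δ1 : 0 < 1 + δ by rewrite addr_gt0.
have p01 : 0 <= p <= 1 by rewrite p1 (le_trans g0 gp).
have L0 : 0 <= ln (1 + δ) by rewrite ln_ge0 // lerDl ltW.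
apply: le_trans (@binpmf_chernoff n p (- ln (1 + δ)) (n%:R * (g * (1 - δ))) _ p01 _) _.
  move=> k; rewrite ler_pdivrMr ?ltr0n // mulrC => kc.
  by rewrite !mulNr lerN2 ler_wpM2l.
have hL : ln (1 + δ) <= (1 + δ - (1 + δ)^-1) / 2.
  by apply: ln_le_half_subV; rewrite lerDl ltW.
rewrite ler_expR expRN lnK ?posrE // /hfun -subr_ge0; set L := ln _ in hL *.
set z := (1 + δ)^-1 in hL *.
have z1 : z <= 1 by rewrite invr_le1 ?unitfE ?gt_eqF // lerDl ltW.
have -> : - (n%:R * g * ((1 + δ) * (L - 1) + 1))
    - (n%:R * p * (z - 1) - - L * (n%:R * (g * (1 - δ))))
  = n%:R * (p - g) * (1 - z) + n%:R * g * (1 + δ - z - 2 * L) by ring.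
have N0 : 0 <= n%:R :> R := ler0n _ _.
by apply: addr_ge0; apply: mulr_ge0; try apply: mulr_ge0; lra.
Qed.
End BinomialTails.

Section ProductBinomial.
Variables (R : realType) (d n : nat) (u : 'I_d -> R).
Implicit Types E : pred {ffun 'I_d -> 'I_n.+1}.

Lemma probBin_andb b E :
  probBin n u (fun s => b && E s) = if b then probBin n u E else 0.
Proof. by case: b => //; apply: big_pred0. Qed.

Lemma probBin_coord j (P : pred 'I_n.+1) :
  probBin n u (fun s => P (s j)) = \sum_(k < n.+1 | P k) binpmf n (u j) k.
Proof.
pose w i (k : 'I_n.+1) := if i == j then (P k)%:R * binpmf n (u i) k
                         else binpmf n (u i) k.
transitivity (\sum_(s : {ffun 'I_d -> 'I_n.+1}) \prod_i w i (s i)).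
  rewrite /probBin big_mkcond; apply: eq_bigr => s _.
  rewrite [RHS](bigD1 j) //= (bigD1 j) //= {1}/w eqxx.
  case: (P (s j)); rewrite ?mul1r ?mul0r //; congr (_ * _).
  by apply: eq_bigr => i /negbTE ij; rewrite /w ij.
rewrite -bigA_distr_bigA (bigD1 j) //= [X in _ * X]big1 ?mulr1; last first.
  by move=> i /negbTE ij; rewrite /w ij sum_binpmf.
rewrite [RHS]big_mkcond; apply: eq_bigr => k _.
by rewrite /w eqxx; case: (P k); rewrite ?mul1r ?mul0r.
Qed.

Lemma probBin_scaled j (P : pred R) :
  probBin n u (fun s => P (scaled s j))
  = \sum_(k < n.+1 | P (k%:R / n%:R)) binpmf n (u j) k.
Proof. exact: (probBin_coord j (fun k : 'I_n.+1 => P (k%:R / n%:R))). Qed.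

Lemma probBin_scaled_compl j (P : pred R) : (0 < n)%N ->
  probBin n u (fun s => P (1 - scaled s j))
  = \sum_(k < n.+1 | P (k%:R / n%:R)) binpmf n (1 - u j) k.
Proof.
move=> n0; rewrite (reindex_inj rev_ord_inj) /=.
under [RHS]eq_bigr do rewrite binpmf_rev subKr.
rewrite -(probBin_coord j (fun k : 'I_n.+1 => P ((rev_ord k)%:R / n%:R))).
apply: eq_bigl => s /=; congr P.
have sn : (s j <= n)%N by rewrite -ltnS.
by rewrite subSS natrB // mulrBl divff ?pnatr_eq0 -?lt0n.
Qed.

Hypothesis u01 : forall j, 0 <= u j <= 1.

Lemma probBin_sub_sum (I : finType) E (F : I -> pred {ffun 'I_d -> 'I_n.+1}) :
  (forall s, E s -> exists i, F i s) -> probBin n u E <= \sum_i probBin n u (F i).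
Proof.
move=> cover; have w0 s : 0 <= \prod_j binpmf n (u j) (s j).
  by apply: prodr_ge0 => j _; exact: binpmf_ge0.
rewrite /probBin; under [leRHS]eq_bigr do rewrite big_mkcond.
rewrite exchange_big [leLHS]big_mkcond /=; apply: ler_sum => s _.
case: ifP => [/cover [i Fis] | _]; last by apply: sumr_ge0 => i _; case: ifP.
rewrite (bigD1 i) //= Fis lerDl.
by apply: sumr_ge0 => k _; case: ifP.
Qed.

Lemma probBinU E1 E2 :
  probBin n u (fun s => E1 s || E2 s) <= probBin n u E1 + probBin n u E2.
Proof.
have -> : probBin n u E1 + probBin n u E2
         = \sum_(b : bool) probBin n u (if b then E1 else E2) by rewrite big_bool.
by apply: probBin_sub_sum => s /orP[E1s|E2s]; [exists true | exists false].
Qed.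

Lemma probBin_guarded_coord_le j (b1 b2 : bool) (P : pred R) (B : R) :
  (0 < n)%N -> 0 <= B ->
  (b1 -> \sum_(k < n.+1 | P (k%:R / n%:R)) binpmf n (u j) k <= B) ->
  (b2 -> \sum_(k < n.+1 | P (k%:R / n%:R)) binpmf n (1 - u j) k <= B) ->
  probBin n u (fun s => b1 && P (scaled s j) || b2 && P (1 - scaled s j)) <= B + B.
Proof.
move=> n0 B0 tail1 tail2; apply: le_trans (probBinU _ _) _.
rewrite !probBin_andb probBin_scaled probBin_scaled_compl //.
by apply: lerD; [case: b1 tail1 | case: b2 tail2] => // ->.
Qed.
End ProductBinomial.

Section GFun.
Variables (R : realType) (d : nat).
Implicit Types (u v : 'I_d -> R) (a c : R).

Definition gcomax u j : R := \big[Num.max/0]_(k < d | k != j) (1 - u k).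

Definition gterm u j : R := Num.min (u j) (gcomax u j).

Lemma gfun_le_gterm u j : gfun u <= gterm u j.
Proof. exact: bigmin_le. Qed.

Lemma gterm_le u j : gterm u j <= u j.
Proof. by rewrite ge_min lexx. Qed.

Lemma gterm_le_gcomax u j : gterm u j <= gcomax u j.
Proof. by rewrite ge_min lexx orbT. Qed.

Lemma gcomax_ge u j k : k != j -> 1 - u k <= gcomax u j.
Proof. by move=> kj; rewrite /gcomax (bigmaxD1 k) // le_max lexx. Qed.

Lemma exists_gterm_le u c : c < 1 -> gfun u <= c -> exists j, gterm u j <= c.
Proof. by move=> c1 /bigmin_leP[|[j _ ?]]; [rewrite leNgt c1 | exists j]. Qed.

Lemma exists_gcomax_ge u j c :
  0 < c -> c <= gcomax u j -> exists2 k, k != j & c <= 1 - u k.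
Proof. by move=> c0 /bigmax_geP[|//]; rewrite leNgt c0. Qed.

Lemma gfun_gt0_lt1 u : (1 < d)%N -> (forall j, 0 < u j < 1) -> 0 < gfun u < 1.
Proof.
move=> d1 u01; pose j0 : 'I_d := Ordinal (ltnW d1); pose j1 : 'I_d := Ordinal d1.
apply/andP; split; last first.
  apply: le_lt_trans (gfun_le_gterm u j0) (le_lt_trans (gterm_le u j0) _).
  by case/andP: (u01 j0).
apply: lt_bigmin => // j _; rewrite lt_min -/(gcomax u j); case/andP: (u01 j) => -> _ /=.
have [k kj] : exists k, k != j.
  by case: (eqVneq j j0) => [->|]; [exists j1 | exists j0; rewrite eq_sym].
apply: lt_le_trans (gcomax_ge u kj); rewrite subr_gt0.
by case/andP: (u01 k).
Qed.

Lemma gfun_ge_cover u v a : gfun u < 1 -> 0 < a -> a <= gfun v ->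
  exists j, (u j <= gfun u) && (a <= v j) || (1 - u j <= gfun u) && (a <= 1 - v j).
Proof.
move=> gu1 a0 av; have av_term i : a <= gterm v i := le_trans av (gfun_le_gterm v i).
have [j] := exists_gterm_le gu1 (lexx _); rewrite ge_min => /orP[uj|cj].
  by exists j; rewrite uj (le_trans (av_term j) (gterm_le v j)).
have [k kj ak] := exists_gcomax_ge a0 (le_trans (av_term j) (gterm_le_gcomax v j)).
by exists k; rewrite ak (le_trans (gcomax_ge u kj) cj) orbT.
Qed.

Lemma gfun_le_cover u v c : 0 < gfun u -> c < 1 -> gfun v <= c ->
  exists j, (gfun u <= u j) && (v j <= c) || (gfun u <= 1 - u j) && (1 - v j <= c).
Proof.
move=> gu0 c1 vc; have gu_term i : gfun u <= gterm u i := gfun_le_gterm u i.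
have [j] := exists_gterm_le c1 vc; rewrite ge_min => /orP[vj|cj].
  by exists j; rewrite vj (le_trans (gu_term j) (gterm_le u j)).
have [k kj gk] := exists_gcomax_ge gu0 (le_trans (gu_term j) (gterm_le_gcomax u j)).
by exists k; rewrite gk (le_trans (gcomax_ge v kj) cj) orbT.
Qed.
End GFun.

Section GfunTails.
Variables (R : realType) (d n : nat) (u : 'I_d -> R).
Hypotheses (d_gt1 : (1 < d)%N) (n_gt0 : (0 < n)%N) (u01 : forall j, 0 < u j < 1).

Let u01W j : 0 <= u j <= 1.
Proof. by case/andP: (u01 j) => /ltW -> /ltW ->. Qed.

Let sum_const_double (B : R) : \sum_(j < d) (B + B) = (2 * d)%:R * B.
Proof. by rewrite sumr_const card_ord -mulr2n -mulrnA mulr_natl. Qed.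

Lemma probBin_gfun_ge δ : 0 < δ ->
  probBin n u (fun s => gfun u * (1 + δ) <= gfun (scaled s))
    <= (2 * d)%:R * expR (- (n%:R * gfun u * hfun (1 + δ))).
Proof.
move=> δ0; have /andP[g0 g1] := gfun_gt0_lt1 d_gt1 u01.
have a0 : 0 < gfun u * (1 + δ) by rewrite mulr_gt0 // addr_gt0.
apply: le_trans (probBin_sub_sum u01W _) _ => [s|].
  exact: gfun_ge_cover g1 a0.
rewrite -sum_const_double; apply: ler_sum => j _.
apply: probBin_guarded_coord_le; rewrite ?expR_ge0 // => ug.
  exact: binpmf_tail_ge.
by apply: binpmf_tail_ge => //; rewrite subr_ge0 gerBl andbC u01W.
Qed.

Lemma probBin_gfun_le δ : 0 < δ ->
  probBin n u (fun s => gfun (scaled s) <= gfun u * (1 - δ))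
    <= (2 * d)%:R * expR (- (n%:R * gfun u * hfun (1 + δ))).
Proof.
move=> δ0; have /andP[g0 g1] := gfun_gt0_lt1 d_gt1 u01.
have c1 : gfun u * (1 - δ) < 1.
  by apply: le_lt_trans g1; rewrite ger_pMr // lerBlDr lerDl ltW.
apply: le_trans (probBin_sub_sum u01W _) _ => [s|].
  exact: gfun_le_cover g0 c1.
rewrite -sum_const_double; apply: ler_sum => j _.
apply: (probBin_guarded_coord_le u01W (P := fun x => x <= gfun u * (1 - δ)));
  rewrite ?expR_ge0 // => gu; have /andP[uj0 uj1] := u01W j.
  by apply: binpmf_tail_le => //; rewrite (ltW g0) gu.
by apply: binpmf_tail_le => //; rewrite ?(ltW g0) ?gu ?gerBl.
Qed.
End GfunTails.

Theorem lemma8 (R : realType) (d n : nat) (u : 'I_d -> R)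
  (hd : (2 <= d)%N) (hn : (0 < n)%N)
  (hu : forall j, 0 < u j < 1) :
  (forall delta : R, 0 < delta ->
     probBin n u (fun s => gfun u * (1 + delta) <= gfun (scaled s))
       <= (2 * d)%:R * expR (- (n%:R * gfun u * hfun (1 + delta))))
  /\
  (forall delta : R, 0 < delta ->
     probBin n u (fun s => gfun (scaled s) <= gfun u * (1 - delta))
       <= (4 * d)%:R * expR (- (n%:R * gfun u * hfun (1 + delta))))
  /\
  (forall delta : R, 0 < delta <= 1 -> delta ^+ 2 / 3 <= hfun (1 + delta)).
Proof.
split; [exact: probBin_gfun_ge | split; last exact: hfun1D_ge_sqr_div3].
move=> δ δ0; apply: le_trans (probBin_gfun_le hd hn hu δ0) _.
by rewrite ler_wpM2r ?expR_ge0 // ler_nat leq_mul2r orbT.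
Qed.
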